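(* Let $M$ be a partial multiplication matrix and let $\pi^\#$ be an $M$-gridded permutation. Then $\pi^\#$ can be expressed as an $M$-sum of $M$-indivisible gridded permutations, $\pi^\#=\pi_1^\#\boxplus\cdots\boxplus\pi_k^\#$. Furthermore, any other expression $\pi^\#=\varphi_1^\#\boxplus\cdots\boxplus\varphi_{\ell}^\#$ of $\pi^\#$ as an $M$-sum of $M$-indivisible gridded permutations satisfies $k=\ell$ and $\{\varphi_1^\#,\dots,\varphi_\ell^\#\}=\{\pi_1^\#,\dots,\pi_k^\#\}$ as multisets.
   Context: A gridding matrix has entries in $\{0,1,-1\}$; an $m\times n$ one has $m$ columns, $n$ rows, $M_{ij}$ in column $i$ from the left and row $j$ from the bottom. An $M$-gridding of a permutation $\pi$ of length $L$ is a choice of vertical lines $\tfrac12=v_0\le\dots\le v_m=L+\tfrac12$ and horizontal lines $\tfrac12=h_0\le\dots\le h_n=L+\tfrac12$, not through points of $\pi$, such that in each cell $C_{ij}=\{v_{i-1}<x<v_i,\ h_{j-1}<y<h_j\}$ the points of $\pi$ are absent if $M_{ij}=0$, increasing if $M_{ij}=1$, decreasing if $M_{ij}=-1$; the result is an $M$-gridded permutation. Two $M$-gridded permutations are regarded as equal if they are order-isomorphic with corresponding points in cells with the same index. $M$ is a partial multiplication matrix: there are fixed $c_1,\dots,c_m,r_1,\dots,r_n\in\{\pm1\}$ with $M_{ij}=c_ir_j$ for each non-zero entry. Column $i$ is oriented left-to-right if $c_i=1$, right-to-left otherwise; row $j$ bottom-to-top if $r_j=1$, top-to-bottom otherwise.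 $M$-sum: for $M$-gridded $\sigma^\#,\tau^\#$, $\sigma^\#\boxplus\tau^\#$ is the $M$-gridded permutation whose points are those of $\sigma^\#$ and $\tau^\#$, each in the cell it occupied, with the relative order (in position and value) among points of $\sigma^\#$ and among points of $\tau^\#$ unchanged, and such that in every column of cells all points of $\sigma^\#$ precede all points of $\tau^\#$ in the column's orientation and in every row of cells all points of $\sigma^\#$ precede all points of $\tau^\#$ in the row's orientation. This operation is associative. $\pi^\#$ is $M$-divisible if $\pi^\#=\sigma^\#\boxplus\tau^\#$ with $\sigma^\#,\tau^\#$ non-empty, and $M$-indivisible otherwise. *)

From mathcomp Require Import all_boot all_order all_algebra.
Set Implicit Arguments. Unset Strict Implicit. Unset Printing Implicit Defensive.
Import GRing.Theory Num.Theory.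
Local Open Scope ring_scope.

(* A gridding matrix with m columns and n rows: M i j, column i, row j.
   Entries are integers (hypothesised to lie in {0,1,-1} in the theorem). *)

(* A point of a gridded permutation: (position x, value y, column, row).
   Positions and values are 0-based (0..L-1). *)
Definition gpoint (m n : nat) := (nat * nat * 'I_m * 'I_n)%type.
Definition gperm (m n : nat) := seq (gpoint m n).

Section GP.
Variables (m n : nat).
Implicit Types (p q : gpoint m n) (s : gperm m n).

Definition px p : nat := p.1.1.1.
Definition py p : nat := p.1.1.2.
Definition pc p : 'I_m := p.1.2.
Definition pr p : 'I_n := p.2.

(* Canonical representative of an M-gridded permutation of length L = size s:
   points listed by position, positions exactly 0..L-1, values a permutation
   of 0..L-1, the column of a point is nondecreasing in its position and the
   row nondecreasing in its value (so separating grid lines exist), and the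
   points in each cell C_ij are absent/increasing/decreasing according to
   M i j = 0 / 1 / -1. Two M-gridded permutations are equal (order isomorphic
   with the same cells) iff their canonical representatives are equal. *)
Definition gridded (M : 'M[int]_(m, n)) s : Prop :=
  [/\ map px s = iota 0 (size s),
      perm_eq (map py s) (iota 0 (size s)),
      (forall p q, p \in s -> q \in s -> (px p < px q)%N -> (pc p <= pc q)%N),
      (forall p q, p \in s -> q \in s -> (py p < py q)%N -> (pr p <= pr q)%N) &
    (forall p, p \in s -> M (pc p) (pr p) != 0)] /\
      (forall p q, p \in s -> q \in s -> pc p = pc q -> pr p = pr q ->
         (px p < px q)%N ->
         (M (pc p) (pr p) = 1 -> (py p < py q)%N) /\
         (M (pc p) (pr p) = -1 -> (py q < py p)%N)).

(* The M-sum sigma [+] tau with respect to column orientations c and row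
   orientations r (c i = 1 : left-to-right, -1 : right-to-left;
   r j = 1 : bottom-to-top, -1 : top-to-bottom).
   A point of sigma is moved right past the tau-points of earlier columns,
   and past the tau-points of its own column when that column is oriented
   right-to-left (so sigma precedes tau in the column's orientation);
   symmetrically for tau, and likewise for values and rows. *)
Definition dx_s (c : 'I_m -> int) tau p : nat :=
  count (fun q => (pc q < pc p)%N || ((pc q == pc p) && (c (pc p) == -1))) tau.
Definition dy_s (r : 'I_n -> int) tau p : nat :=
  count (fun q => (pr q < pr p)%N || ((pr q == pr p) && (r (pr p) == -1))) tau.
Definition dx_t (c : 'I_m -> int) sigma q : nat :=
  count (fun p => (pc p < pc q)%N || ((pc p == pc q) && (c (pc q) == 1))) sigma.
Definition dy_t (r : 'I_n -> int) sigma q : nat :=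
  count (fun p => (pr p < pr q)%N || ((pr p == pr q) && (r (pr q) == 1))) sigma.

Definition msum (c : 'I_m -> int) (r : 'I_n -> int) (sigma tau : gperm m n)
  : gperm m n :=
  sort (fun p q : gpoint m n => (px p <= px q)%N)
    ([seq ((px p + dx_s c tau p)%N, (py p + dy_s r tau p)%N, pc p, pr p)
        | p <- sigma] ++
     [seq ((px q + dx_t c sigma q)%N, (py q + dy_t r sigma q)%N, pc q, pr q)
        | q <- tau]).

Definition msumL c r (ps : seq (gperm m n)) : gperm m n :=
  foldr (msum c r) [::] ps.

Definition divisible (M : 'M[int]_(m, n)) c r s : Prop :=
  exists sigma tau, [/\ gridded M sigma, gridded M tau,
    sigma != [::], tau != [::] & msum c r sigma tau = s].

Definition indivisible (M : 'M[int]_(m, n)) c r s : Prop :=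
  [/\ gridded M s, s != [::] & ~ divisible M c r s].

End GP.

From mathcomp Require Import all_boot all_order all_algebra.
From Stdlib Require Import Classical.
Import GRing.Theory.
Set Implicit Arguments. Unset Strict Implicit. Unset Printing Implicit Defensive.

(* Call a set S of points of pi initial when every point of S precedes, in the
   orientation of their common column or row, every point outside S sharing that
   column or row. M-sum factorizations pi = sigma [+] tau correspond exactly to initial
   sets S, with sigma and tau the standardizations of S and of its complement, so
   M-indivisible summands correspond to indecomposable blocks (nonempty, with no proper
   nonempty initial subset) and a factorization into indivisibles is a sequence of such
   blocks peeled off one after the other. Such a sequence exists by choosing a minimal
   initial block. It is unique up to order by a diamond argument: two first blocks B
   and C are equal when they meet (their intersection is initial in both) and are
   otherwise disjoint, in which case each stays a first block once the other is
   removed. *)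

(** * Decompositions into indecomposable initial blocks *)

Section Decomposition.
Variables (T : eqType) (before : T -> T -> Prop).
Implicit Types (U V X B C : seq T) (Y Z : pred T) (Bs Cs : seq (seq T)).

Definition initial V Y := {in V &, forall a b, Y a -> ~~ Y b -> before a b}.

Definition indecomposable X :=
  X != [::] /\ forall Y, initial X Y -> has Y X -> all Y X.

Fixpoint decomposition V Bs : Prop :=
  if Bs is B :: Bs' then
    [/\ B = filter (mem B) V, initial V (mem B), indecomposable B &
        decomposition (filter (predC (mem B)) V) Bs']
  else V = [::].

Lemma sub_initial U V Y : {subset U <= V} -> initial V Y -> initial U Y.
Proof. by move=> sUV iV a b /sUV aV /sUV bV; apply: iV. Qed.

Lemma initial_filterI V Y Z :
  initial V Y -> initial (filter Y V) Z -> initial V (predI Z Y).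
Proof.
move=> iY iZ a b aV bV /andP[Za Ya]; case Yb: (Y b); last by move=> _; apply: iY; rewrite ?Yb.
by rewrite /= Yb andbT => nZb; apply: iZ; rewrite ?mem_filter ?Ya ?Yb.
Qed.

Lemma not_indecomposable X : X != [::] -> ~ indecomposable X ->
  exists Y, [/\ initial X Y, has Y X & ~~ all Y X].
Proof.
move=> X0 nX; apply: NNPP => nY; apply: nX; split=> // Y iY hY.
by apply/negPn/negP => nall; apply: nY; exists Y.
Qed.

Lemma filter_mem_filter V Y : filter (mem (filter Y V)) V = filter Y V.
Proof. by apply: eq_in_filter => x xV; rewrite /= mem_filter xV andbT. Qed.

Lemma size_filterC_lt V X : {subset X <= V} -> X != [::] ->
  size (filter (predC (mem X)) V) < size V.
Proof.
case: X => // x X sXV _; rewrite size_filter -(count_predC (predC (mem (x :: X)))).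
rewrite -{1}[count _ V]addn0 ltn_add2l -has_count; apply/hasP.
by exists x; [apply: sXV; rewrite mem_head | rewrite /= negbK mem_head].
Qed.

Lemma exists_indecomposable_initial V Y : initial V Y -> has Y V ->
  exists Z, [/\ initial V Z, has Z V & indecomposable (filter Z V)].
Proof.
move: {2}(count Y V) (leqnn (count Y V)) => k; elim: k Y => [|k IH] Y.
  by rewrite leqn0 has_count => /eqP ->.
move=> cY iY hY; have [indY|] := classic (indecomposable (filter Y V)); first by exists Y.
case/not_indecomposable=> [|Z [iZ hZ nallZ]].
  by rewrite -size_eq0 size_filter -lt0n -has_count.
have ltZY : count (predI Z Y) V < count Y V.
  rewrite -count_filter -[count Y V]size_filter -(count_predC Z (filter Y V)).
  rewrite -{1}[count Z _]addn0 ltn_add2l.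
  by rewrite -has_count has_predC.
apply: (IH (predI Z Y)); first by rewrite -ltnS (leq_trans ltZY).
- exact: initial_filterI.
- by rewrite has_count -count_filter -has_count.
Qed.

Lemma exists_decomposition V : exists Bs, decomposition V Bs.
Proof.
move: {2}(size V) (leqnn (size V)) => k; elim: k V => [|k IH] V.
  by rewrite leqn0 size_eq0 => /eqP ->; exists [::].
move=> sV; case: (altP (V =P [::])) => [->|V0]; first by exists [::].
have hV : has predT V by case: (V) V0.
have iV : initial V predT by [].
have [Z [iZ hZ indZ]] := exists_indecomposable_initial iV hV.
have sZV : {subset filter Z V <= V} by apply: mem_subseq; apply: filter_subseq.
have [Bs dBs] := IH (filter (predC (mem (filter Z V))) V)
  (leq_trans (size_filterC_lt sZV indZ.1) sV).
exists (filter Z V :: Bs); split=> //; first by rewrite filter_mem_filter.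
by move=> a b aV bV; rewrite /= !mem_filter aV bV !andbT; apply: iZ.
Qed.

Lemma decomposition_nil Bs : decomposition [::] Bs -> Bs = [::].
Proof. by case: Bs => //= B Bs [eB _ [B0 _] _]; move: B0; rewrite eB. Qed.

Lemma indecomposable_initial_sub V B C : {subset B <= V} -> initial V (mem C) ->
  indecomposable B -> has (mem C) B -> {subset B <= C}.
Proof. by move=> sBV iC [_ indB] /(indB _ (sub_initial sBV iC))/allP. Qed.

Lemma indecomposable_initial_eq V B C :
  B = filter (mem B) V -> C = filter (mem C) V -> initial V (mem B) -> initial V (mem C) ->
  indecomposable B -> indecomposable C -> has (mem C) B -> B = C.
Proof.
move=> eB eC iB iC indB indC hCB.
have sBV : {subset B <= V} by rewrite eB => x; rewrite mem_filter => /andP[].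
have sCV : {subset C <= V} by rewrite eC => x; rewrite mem_filter => /andP[].
have hBC : has (mem B) C by case/hasP: hCB => x xB xC; apply/hasP; exists x.
have sBC := indecomposable_initial_sub sBV iC indB hCB.
have sCB := indecomposable_initial_sub sCV iB indC hBC.
rewrite eB eC; apply: eq_in_filter => x _; apply/idP/idP; [exact: sBC | exact: sCB].
Qed.

Lemma decomposition_cons_disjoint V B C Rs :
  C = filter (mem C) V -> initial V (mem C) -> indecomposable C -> ~~ has (mem B) C ->
  decomposition (filter (predC (mem C)) (filter (predC (mem B)) V)) Rs ->
  decomposition (filter (predC (mem B)) V) (C :: Rs).
Proof.
move=> eC iC indC dBC dRs; split=> //.
- rewrite -filter_predI {1}eC; apply: eq_in_filter => x _.
  apply/idP/andP => [xC|[]//]; split=> //; apply/negP => xB.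
  by case/hasP: dBC; exists x.
- by apply: sub_initial iC; apply: mem_subseq; apply: filter_subseq.
Qed.

Lemma decomposition_perm_eq V Bs Cs :
  decomposition V Bs -> decomposition V Cs -> perm_eq Bs Cs.
Proof.
move: {2}(size V) (leqnn (size V)) => k; elim: k V Bs Cs => [|k IH] V Bs Cs.
  rewrite leqn0 size_eq0 => /eqP -> /decomposition_nil -> /decomposition_nil -> //.
move=> sV; case: Bs => [|B Bs] dB; first by rewrite dB => /decomposition_nil ->.
case: Cs => [|C Cs] dC; first by move: dB; rewrite dC => /decomposition_nil.
case: dB => eB iB indB dBs; case: dC => eC iC indC dCs.
have sBV : {subset B <= V} by rewrite eB => x; rewrite mem_filter => /andP[].
have sCV : {subset C <= V} by rewrite eC => x; rewrite mem_filter => /andP[].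
have szB := leq_trans (size_filterC_lt sBV indB.1) sV.
have szC := leq_trans (size_filterC_lt sCV indC.1) sV.
have [hCB|dCB] := boolP (has (mem C) B).
  move: dCs; rewrite -(indecomposable_initial_eq eB eC iB iC indB indC hCB) => dCs.
  by rewrite perm_cons; apply: IH dBs dCs.
have dBC : ~~ has (mem B) C by apply: contra dCB => /hasP[x xC xB]; apply/hasP; exists x.
have [Rs dRs] := exists_decomposition (filter (predC (mem C)) (filter (predC (mem B)) V)).
have dRs' : decomposition (filter (predC (mem B)) (filter (predC (mem C)) V)) Rs.
  move: dRs; congr (decomposition _ _); rewrite -!filter_predI.
  by apply: eq_filter => x /=; rewrite andbC.
have pB := IH _ _ _ szB dBs (decomposition_cons_disjoint eC iC indC dBC dRs).
have pC := IH _ _ _ szC dCs (decomposition_cons_disjoint eB iB indB dCB dRs').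
apply: (@perm_trans _ [:: B, C & Rs]); first by rewrite perm_cons.
by rewrite (perm_catCA [:: B] [:: C]) perm_cons perm_sym.
Qed.

End Decomposition.

Lemma uniq_map_inj_in (T1 T2 : eqType) (f : T1 -> T2) (s : seq T1) :
  uniq (map f s) -> {in s &, injective f}.
Proof.
elim: s => //= x s IH /andP[fx_notin us] a b; rewrite !inE.
case/orP=> [/eqP->|as_] /orP[/eqP->|bs] fab //; last exact: IH.
- by move: fx_notin; rewrite fab map_f.
- by move: fx_notin; rewrite -fab map_f.
Qed.

Lemma mem_map_in (T1 T2 : eqType) (f : T1 -> T2) (s u : seq T1) x :
  {in s &, injective f} -> {subset u <= s} -> x \in s -> (f x \in map f u) = (x \in u).
Proof.
move=> finj sus xs; apply/mapP/idP => [[y yu /finj -> //]|xu]; last by exists x.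
exact: sus.
Qed.

(** * Ranks and standardization *)

Section Rank.
Variables (T : eqType) (k : T -> nat).
Implicit Types (w : seq T) (a b : T).

Definition rank w a := count (fun b => k b < k a) w.

Lemma rank_leq w a b : k a <= k b -> rank w a <= rank w b.
Proof. by move=> kab; apply: sub_count => z /= kza; apply: leq_trans kza kab. Qed.

Lemma rank_lt w a b : a \in w -> k a < k b -> rank w a < rank w b.
Proof.
move=> aw kab; apply: (@leq_trans (count (predU (fun z => k z < k a) (pred1 a)) w)).
  have disj : count (predI (fun z => k z < k a) (pred1 a)) w = 0.
    by rewrite (@eq_count _ _ pred0) ?count_pred0 // => z /=; case: eqP => [->|];
      rewrite ?ltnn ?andbF.
  by rewrite -[X in _ <= X]addn0 -disj count_predUI -addn1 leq_add2l -has_count has_pred1.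
by apply: sub_count => z /= /orP[kza|/eqP->] //; apply: ltn_trans kza kab.
Qed.

Lemma rank_ltE w a b : a \in w -> (rank w a < rank w b) = (k a < k b).
Proof.
move=> aw; case: (ltnP (k a) (k b)) => kab; first by rewrite rank_lt.
by apply/negbTE; rewrite -leqNgt rank_leq.
Qed.

Lemma rank_lt_size w a : a \in w -> rank w a < size w.
Proof.
move=> aw; rewrite -(count_predC (fun b => k b < k a) w) -{1}[rank w a]addn0 ltn_add2l.
by rewrite -has_count; apply/hasP; exists a; rewrite //= ltnn.
Qed.

Lemma rank_inj w : {in w &, injective k} -> {in w &, injective (rank w)}.
Proof.
move=> kinj a b aw bw eab; apply: kinj => //.
case: (ltngtP (k a) (k b)) => // kab.
- by move: (rank_lt aw kab); rewrite eab ltnn.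
- by move: (rank_lt bw kab); rewrite eab ltnn.
Qed.

Lemma perm_map_rank w : uniq w -> {in w &, injective k} ->
  perm_eq (map (rank w) w) (iota 0 (size w)).
Proof.
move=> uw kinj; have uniq_ranks : uniq (map (rank w) w).
  by rewrite (map_inj_in_uniq (rank_inj kinj)).
have sub_iota : {subset map (rank w) w <= iota 0 (size w)}.
  by move=> _ /mapP[a aw ->]; rewrite mem_iota rank_lt_size.
have [|_ eq_ranks] := uniq_min_size uniq_ranks sub_iota; first by rewrite size_map size_iota.
by apply: uniq_perm eq_ranks => //; exact: iota_uniq.
Qed.

End Rank.

Lemma perm_iota_lt (T : eqType) (k : T -> nat) (w : seq T) a :
  perm_eq (map k w) (iota 0 (size w)) -> a \in w -> k a < size w.
Proof.
move=> kw aw; have : k a \in iota 0 (size w) by rewrite -(perm_mem kw) map_f.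
by rewrite mem_iota add0n.
Qed.

Lemma rank_perm_iota (T : eqType) (k : T -> nat) (w : seq T) a :
  perm_eq (map k w) (iota 0 (size w)) -> a \in w -> rank k w a = k a.
Proof.
move=> kw aw; have ka_le := ltnW (perm_iota_lt kw aw).
by rewrite /rank -(count_map k (fun y => y < k a)) (permP kw) -size_filter
  (filter_iota_ltn 0 ka_le) size_iota.
Qed.

Definition px_le m n (p q : gpoint m n) := px p <= px q.

Lemma sort_px_le_perm m n (s1 s2 : gperm m n) :
  perm_eq s1 s2 -> {in s1 &, injective (@px m n)} -> sort (@px_le m n) s1 = sort (@px_le m n) s2.
Proof.
move=> s12 pxinj; apply/perm_sort_inP => //.
- by move=> p q _ _; exact: leq_total.
- by move=> p q r _ _ _; exact: leq_trans.
- by move=> p q ps qs /anti_leq; exact: pxinj.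
Qed.

Section Standardization.
Variables (m n : nat) (T : eqType) (kx ky : T -> nat) (col : T -> 'I_m) (row : T -> 'I_n).
Implicit Types (M : 'M[int]_(m, n)) (w : seq T) (P : pred T).

Definition std_point w a : gpoint m n := (rank kx w a, rank ky w a, col a, row a).

Definition std w : gperm m n := sort (@px_le m n) (map (std_point w) w).

(* A configuration generalizes a gridded permutation: positions and values are given
   by arbitrary injective keys [kx] and [ky] rather than by 0, ..., L-1. Subsets of the
   points of a gridded permutation are configurations, and [std] turns a configuration
   into the canonical representative of the gridded permutation it determines. *)
Record grid_config M w : Prop := GridConfig {
  config_uniq : uniq w;
  config_injx : {in w &, injective kx};
  config_injy : {in w &, injective ky};
  config_col : {in w &, forall a b, kx a < kx b -> col a <= col b};
  config_row : {in w &, forall a b, ky a < ky b -> row a <= row b};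
  config_nz : {in w, forall a, M (col a) (row a) != 0%R};
  config_cell : {in w &, forall a b, col a = col b -> row a = row b -> kx a < kx b ->
    (M (col a) (row a) = 1%R -> ky a < ky b) /\ (M (col a) (row a) = (-1)%R -> ky b < ky a)}
}.

Lemma size_std w : size (std w) = size w.
Proof. by rewrite size_sort size_map. Qed.

Lemma grid_config_filter M w P : grid_config M w -> grid_config M (filter P w).
Proof.
case=> uw ix iy cx ry nz cell; have sub : {subset filter P w <= w}.
  by apply: mem_subseq; apply: filter_subseq.
split; first exact: filter_uniq.
- by move=> a b /sub aw /sub bw; apply: ix.
- by move=> a b /sub aw /sub bw; apply: iy.
- by move=> a b /sub aw /sub bw; apply: cx.
- by move=> a b /sub aw /sub bw; apply: ry.
- by move=> a /sub aw; apply: nz.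
- by move=> a b /sub aw /sub bw; apply: cell.
Qed.

Lemma std_gridded M w : grid_config M w -> gridded M (std w).
Proof.
case=> uw ix iy cx ry nz cell.
have memP p : p \in std w -> exists2 a, a \in w & p = std_point w a.
  by rewrite mem_sort => /mapP.
have perm_std k1 k2 : map k2 w = map k1 (map (std_point w) w) ->
    perm_eq (map k1 (std w)) (map k2 w).
  by move=> ->; apply: perm_map; rewrite perm_sort.
split; [split|].
- apply: (@sorted_eq _ leq leq_trans anti_leq).
  + by rewrite sorted_map; apply: sort_sorted => ? ?; apply: leq_total.
  + exact: iota_sorted.
  + rewrite size_std; apply: perm_trans (perm_map_rank uw ix).
    by apply: perm_std; rewrite -map_comp.
- rewrite size_std; apply: perm_trans (perm_map_rank uw iy).
  by apply: perm_std; rewrite -map_comp.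
- by move=> p q /memP[a aw ->] /memP[b bw ->]; rewrite /px /pc /= rank_ltE //; apply: cx.
- by move=> p q /memP[a aw ->] /memP[b bw ->]; rewrite /py /pr /= rank_ltE //; apply: ry.
- by move=> p /memP[a aw ->]; apply: nz.
- move=> p q /memP[a aw ->] /memP[b bw ->]; rewrite /px /py /pc /pr /= => ec er.
  by rewrite !rank_ltE //; apply: cell.
Qed.

Lemma std_eq_nil w : (std w == [::]) = (w == [::]).
Proof. by rewrite -!size_eq0 size_std. Qed.

Lemma std_point_inj w : {in w &, injective kx} -> {in w &, injective (std_point w)}.
Proof. by move=> ix a b aw bw /(congr1 (@px m n)); apply: rank_inj. Qed.

End Standardization.

Notation stdG := (std (@px _ _) (@py _ _) (@pc _ _) (@pr _ _)).
Notation std_pointG := (std_point (@px _ _) (@py _ _) (@pc _ _) (@pr _ _)).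
Notation configG := (grid_config (@px _ _) (@py _ _) (@pc _ _) (@pr _ _)).

Lemma std_iso m n (T1 T2 : eqType)
    (kx1 ky1 : T1 -> nat) (col1 : T1 -> 'I_m) (row1 : T1 -> 'I_n)
    (kx2 ky2 : T2 -> nat) (col2 : T2 -> 'I_m) (row2 : T2 -> 'I_n)
    (w1 : seq T1) (w2 : seq T2) (f : T1 -> T2) :
  perm_eq (map f w1) w2 -> {in w2 &, injective kx2} ->
  {in w1 &, forall a b, (kx1 a < kx1 b) = (kx2 (f a) < kx2 (f b))} ->
  {in w1 &, forall a b, (ky1 a < ky1 b) = (ky2 (f a) < ky2 (f b))} ->
  {in w1, forall a, col1 a = col2 (f a)} -> {in w1, forall a, row1 a = row2 (f a)} ->
  std kx1 ky1 col1 row1 w1 = std kx2 ky2 col2 row2 w2.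
Proof.
move=> w12 ix2 fx fy fcol frow.
have rank_f k1 k2 : {in w1 &, forall a b, (k1 a < k1 b) = (k2 (f a) < k2 (f b))} ->
    {in w1, forall a, rank k1 w1 a = rank k2 w2 (f a)}.
  by move=> fk a aw; rewrite /rank -(permP w12) count_map; apply: eq_in_count => z zw; apply: fk.
rewrite /std; have -> : map (std_point kx1 ky1 col1 row1 w1) w1 =
          map (std_point kx2 ky2 col2 row2 w2) (map f w1).
  rewrite -map_comp; apply/eq_in_map => a aw /=.
  by rewrite /std_point (rank_f _ _ fx) ?(rank_f _ _ fy) ?fcol ?frow.
apply: sort_px_le_perm; first exact: perm_map.
move=> _ _ /mapP[a aw ->] /mapP[b bw ->] /= eab; congr std_point.
by apply: (rank_inj ix2); rewrite -?(perm_mem w12) ?map_f.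
Qed.

Lemma std_perm m n (T : eqType) (kx ky : T -> nat) (col : T -> 'I_m) (row : T -> 'I_n)
    (w1 w2 : seq T) :
  perm_eq w1 w2 -> {in w2 &, injective kx} -> std kx ky col row w1 = std kx ky col row w2.
Proof. by move=> w12 ix; apply: (std_iso (f := id)) => //; rewrite map_id. Qed.

Lemma std_map_std_point m n (T : eqType) (kx ky : T -> nat) (col : T -> 'I_m)
    (row : T -> 'I_n) (w u : seq T) :
  {subset u <= w} -> {in w &, injective kx} ->
  std (@px m n) (@py m n) (@pc m n) (@pr m n) (map (std_point kx ky col row w) u) =
  std kx ky col row u.
Proof.
move=> suw ix; symmetry; apply: std_iso => //.
- move=> _ _ /mapP[a /suw aw ->] /mapP[b /suw bw ->] eab.
  by rewrite (rank_inj ix aw bw eab).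
- by move=> a b /suw aw _; rewrite /px /= rank_ltE.
- by move=> a b /suw aw _; rewrite /py /= rank_ltE.
Qed.

Section StdMatch.
Variables (m n : nat) (T1 T2 : eqType).
Variables (kx1 ky1 : T1 -> nat) (col1 : T1 -> 'I_m) (row1 : T1 -> 'I_n).
Variables (kx2 ky2 : T2 -> nat) (col2 : T2 -> 'I_m) (row2 : T2 -> 'I_n).
Variables (w1 : seq T1) (w2 : seq T2).
Hypotheses (inj1 : {in w1 &, injective kx1}) (inj2 : {in w2 &, injective kx2}).
Hypothesis std_eq : std kx1 ky1 col1 row1 w1 = std kx2 ky2 col2 row2 w2.

Local Notation std1 := (std kx1 ky1 col1 row1).
Local Notation std2 := (std kx2 ky2 col2 row2).
Local Notation h := (std_point kx1 ky1 col1 row1 w1).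
Local Notation g := (std_point kx2 ky2 col2 row2 w2).

Lemma perm_std_points : perm_eq (map h w1) (map g w2).
Proof.
rewrite -(perm_sort (@px_le m n)); change (perm_eq (std1 w1) (map g w2)).
by rewrite std_eq perm_sort.
Qed.

Lemma std_point_match a : a \in w1 -> exists2 z, z \in w2 & h a = g z.
Proof.
move=> aw; have : h a \in map g w2 by rewrite -(perm_mem perm_std_points) map_f.
by case/mapP=> z zw ->; exists z.
Qed.

Lemma std_filter_match (P : pred T1) (Q : pred T2) :
  {in w1 & w2, forall a z, h a = g z -> P a = Q z} ->
  std1 (filter P w1) = std2 (filter Q w2).
Proof.
move=> PQ; have ginj : {in w2 &, injective g} := std_point_inj inj2.
have sub1 : {subset filter P w1 <= w1} by apply: mem_subseq; apply: filter_subseq.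
have sub2 : {subset filter Q w2 <= w2} by apply: mem_subseq; apply: filter_subseq.
rewrite -(std_map_std_point _ _ _ sub1 inj1) -(std_map_std_point _ _ _ sub2 inj2).
set R := mem (map g (filter Q w2)).
have -> : map h (filter P w1) = filter R (map h w1).
  rewrite filter_map; congr map; apply: eq_in_filter => a aw /=.
  have [z zw haz] := std_point_match aw.
  by rewrite /R /= haz (mem_map_in ginj sub2 zw) mem_filter zw andbT (PQ a z aw zw haz).
have -> : map g (filter Q w2) = filter R (map g w2).
  rewrite filter_map; congr map; apply: eq_in_filter => z zw /=.
  by rewrite /R /= (mem_map_in ginj sub2 zw) mem_filter zw andbT.
apply: std_perm; first by apply: perm_filter; apply: perm_std_points.
move=> p q; rewrite !mem_filter => /andP[_ /mapP[z1 z1w ->]] /andP[_ /mapP[z2 z2w ->]].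
by move=> /(rank_inj inj2 z1w z2w) ->.
Qed.
Lemma std_point_lt a b z1 z2 : a \in w1 -> z1 \in w2 -> h a = g z1 -> h b = g z2 ->
  (kx1 a < kx1 b) = (kx2 z1 < kx2 z2) /\ (ky1 a < ky1 b) = (ky2 z1 < ky2 z2).
Proof.
move=> aw z1w ha hb; rewrite -(rank_ltE kx1 b aw) -(rank_ltE ky1 b aw).
rewrite -(rank_ltE kx2 z2 z1w) -(rank_ltE ky2 z2 z1w).
have xa : rank kx1 w1 a = rank kx2 w2 z1 := congr1 (@px m n) ha.
have xb : rank kx1 w1 b = rank kx2 w2 z2 := congr1 (@px m n) hb.
have ya : rank ky1 w1 a = rank ky2 w2 z1 := congr1 (@py m n) ha.
have yb : rank ky1 w1 b = rank ky2 w2 z2 := congr1 (@py m n) hb.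
by rewrite xa xb ya yb.
Qed.

Lemma std_filter_pullback (Q : pred T2) : exists S : pred T1,
  [/\ {in w1 & w2, forall a z, h a = g z -> S a = Q z},
      std1 (filter S w1) = std2 (filter Q w2) &
      std1 (filter (predC S) w1) = std2 (filter (predC Q) w2)].
Proof.
have ginj : {in w2 &, injective g} := std_point_inj inj2.
have sub2 : {subset filter Q w2 <= w2} by apply: mem_subseq; apply: filter_subseq.
exists (fun a => h a \in map g (filter Q w2)).
have SQ : {in w1 & w2, forall a z, h a = g z -> (h a \in map g (filter Q w2)) = Q z}.
  by move=> a z aw zw ->; rewrite (mem_map_in ginj sub2 zw) mem_filter zw andbT.
split=> //; apply: std_filter_match => a z aw zw haz /=; by rewrite (SQ a z aw zw haz).
Qed.

End StdMatch.

Section CellOrder.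
Variables (T : eqType) (K : nat) (coord : T -> nat) (cell : T -> 'I_K) (o : 'I_K -> int).
Implicit Types (a b : T) (w : seq T).

Definition cell_lex a b := (cell a < cell b) || ((cell a == cell b) && (coord a < coord b)).

Definition prec a b := cell a = cell b ->
  (o (cell a) = 1%R -> coord a < coord b) /\ (o (cell a) = (-1)%R -> coord b < coord a).

Lemma lt_cell_lex w : {in w &, injective coord} ->
  {in w &, forall a b, coord a < coord b -> cell a <= cell b} ->
  {in w &, forall a b, (coord a < coord b) = cell_lex a b}.
Proof.
move=> inj mono a b aw bw; rewrite /cell_lex.
case: (ltngtP (cell a) (cell b)) => [ab|ba|/ord_inj ->]; last by rewrite eqxx.
- case: (ltngtP (coord a) (coord b)) => [//|ba|eab].
    by have := mono _ _ bw aw ba; rewrite leqNgt ab.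
  by move: ab; rewrite (inj _ _ aw bw eab) ltnn.
- have -> : (cell a == cell b) = false by apply/eqP => eab; rewrite eab ltnn in ba.
  rewrite /=; apply/negbTE/negP => ab.
  by have := mono _ _ aw bw ab; rewrite leqNgt ba.
Qed.

Hypothesis o_sign : forall i, o i = 1%R \/ o i = (-1)%R.

Lemma prec_lt_cross a b : (coord a < coord b) = cell_lex a b -> prec a b ->
  (coord a < coord b) = (cell a < cell b) || ((cell a == cell b) && (o (cell b) == 1)%R).
Proof.
rewrite /cell_lex => -> pab; case: eqVneq => [eab|] //=; have [ab ba] := pab eab.
rewrite -eab ltnn /=; case: (o_sign (cell a)) => oa; rewrite oa; first by rewrite ab.
by rewrite ltnNge (ltnW (ba oa)).
Qed.

Lemma prec_gt_cross a b : (coord a < coord b) = cell_lex a b -> prec b a ->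
  (coord a < coord b) = (cell a < cell b) || ((cell a == cell b) && (o (cell b) == -1)%R).
Proof.
rewrite /cell_lex => -> pba; case: eqVneq => [eab|] //=; have [ba ab] := pba (esym eab).
rewrite eab ltnn /=; case: (o_sign (cell b)) => ob; rewrite ob; last by rewrite ab.
by rewrite ltnNge (ltnW (ba ob)).
Qed.

End CellOrder.

Lemma prec_transfer (T1 T2 : eqType) K (o : 'I_K -> int)
    (coord1 : T1 -> nat) (cell1 : T1 -> 'I_K) (coord2 : T2 -> nat) (cell2 : T2 -> 'I_K)
    a b a' b' :
  cell1 a = cell2 a' -> cell1 b = cell2 b' ->
  (coord1 a < coord1 b) = (coord2 a' < coord2 b') ->
  (coord1 b < coord1 a) = (coord2 b' < coord2 a') ->
  prec coord2 cell2 o a' b' -> prec coord1 cell1 o a b.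
Proof. by rewrite /prec => ea eb -> -> p eab; rewrite ea; apply: p; rewrite -ea -eb. Qed.

Section Gridded.
Variables (m n : nat) (M : 'M[int]_(m, n)).
Implicit Types (s : gperm m n) (p : gpoint m n).

Lemma gridded_perm_px s : gridded M s -> perm_eq (map (@px m n) s) (iota 0 (size s)).
Proof. by case=> [[-> _ _ _ _] _]. Qed.

Lemma gridded_perm_py s : gridded M s -> perm_eq (map (@py m n) s) (iota 0 (size s)).
Proof. by case=> [[_ ? _ _ _] _]. Qed.

Lemma gridded_config s : gridded M s -> configG M s.
Proof.
move=> gs; case: (gs) => [[_ _ cx ry nz] cell].
have ux : uniq (map (@px m n) s) by rewrite (perm_uniq (gridded_perm_px gs)) iota_uniq.
have uy : uniq (map (@py m n) s) by rewrite (perm_uniq (gridded_perm_py gs)) iota_uniq.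
by split=> //; [exact: map_uniq ux | exact: uniq_map_inj_in | exact: uniq_map_inj_in].
Qed.

Lemma gridded_px_lt s p : gridded M s -> p \in s -> px p < size s.
Proof. by move/gridded_perm_px/perm_iota_lt; apply. Qed.

Lemma gridded_py_lt s p : gridded M s -> p \in s -> py p < size s.
Proof. by move/gridded_perm_py/perm_iota_lt; apply. Qed.

Lemma std_gridded_id s : gridded M s -> stdG s = s.
Proof.
move=> gs; rewrite /std (_ : map _ s = s); last first.
  rewrite -[RHS]map_id; apply/eq_in_map => p ps.
  rewrite /std_point !rank_perm_iota ?gridded_perm_px ?gridded_perm_py //.
  by case: p ps => [[[? ?] ?] ?].
apply: sorted_sort; first by move=> x y z; exact: leq_trans.
by case: gs => [[px_iota _ _ _ _] _]; rewrite /px_le -sorted_map px_iota iota_sorted.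
Qed.

Lemma gridded_cell_lex_x s : gridded M s ->
  {in s &, forall a b, (px a < px b) = cell_lex (@px m n) (@pc m n) a b}.
Proof. by move/gridded_config=> [_ ix _ cx _ _ _]; apply: lt_cell_lex. Qed.

Lemma gridded_cell_lex_y s : gridded M s ->
  {in s &, forall a b, (py a < py b) = cell_lex (@py m n) (@pr m n) a b}.
Proof. by move/gridded_config=> [_ _ iy _ ry _ _]; apply: lt_cell_lex. Qed.

End Gridded.

(** * Sorting keys realising M-sums *)

Lemma lex_ltn (x1 x2 y1 y2 B : nat) : y1 < B -> y2 < B ->
  (x1 * B + y1 < x2 * B + y2) = (x1 < x2) || ((x1 == x2) && (y1 < y2)).
Proof.
move=> y1B y2B; have step x x' y y' : y < B -> x < x' -> x * B + y < x' * B + y'.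
  move=> yB xx'; apply: (@leq_trans (x.+1 * B)); first by rewrite mulSn addnC ltn_add2r.
  by apply: leq_trans (leq_addr _ _); rewrite leq_mul2r xx' orbT.
case: (ltngtP x1 x2) => [x12|x21|->] /=; first exact: step.
  by apply/negbTE; rewrite -leqNgt ltnW // step.
by rewrite ltn_add2l.
Qed.

Lemma lex_eqn (x1 x2 y1 y2 B : nat) : y1 < B -> y2 < B ->
  (x1 * B + y1 == x2 * B + y2) = (x1 == x2) && (y1 == y2).
Proof.
move=> y1B y2B.
rewrite eqn_leq (leqNgt (x1 * B + y1)) (leqNgt (x2 * B + y2)) !lex_ltn //.
by case: (ltngtP x1 x2); case: (ltngtP y1 y2).
Qed.

Definition lexkey (B i : nat) (flag : bool) (y : nat) := (2 * i + flag) * B + y.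

Lemma lexkey_ltE K B (i j : 'I_K) f g y z : y < B -> z < B ->
  (lexkey B i f y < lexkey B j g z) = (i < j) || ((i == j) && ((f < g) || ((f == g) && (y < z)))).
Proof.
move=> yB zB; have flag2 (b : bool) : b < 2 by case: b.
rewrite /lexkey lex_ltn // ![2 * _]mulnC lex_ltn // lex_eqn // -orbA -andbA -andb_orr.
by congr (_ || (_ && (_ || (_ && _)))); case: f; case: g.
Qed.

Lemma lexkey_eqE K B (i j : 'I_K) f g y z : y < B -> z < B ->
  (lexkey B i f y == lexkey B j g z) = [&& i == j, f == g & y == z].
Proof.
move=> yB zB; have flag2 (b : bool) : b < 2 by case: b.
rewrite /lexkey lex_eqn // ![2 * _]mulnC lex_eqn // -andbA.
by congr (_ && (_ && _)); case: f; case: g.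
Qed.

Definition tagged_cat (T : Type) (s1 s2 : seq T) : seq (T + T) := map inl s1 ++ map inr s2.

Definition untag_sum (T : Type) (z : T + T) : T := match z with inl a | inr a => a end.

Lemma mem_tagged_cat_inl (T : eqType) (s1 s2 : seq T) a :
  (inl a \in tagged_cat s1 s2) = (a \in s1).
Proof.
rewrite mem_cat (mem_map (@inl_inj T T)) orbC.
by case: mapP => // -[].
Qed.

Lemma mem_tagged_cat_inr (T : eqType) (s1 s2 : seq T) a :
  (inr a \in tagged_cat s1 s2) = (a \in s2).
Proof.
rewrite mem_cat (mem_map (@inr_inj T T)).
by case: mapP => // -[].
Qed.

Definition is_inl (T : Type) (z : T + T) : bool := if z is inl _ then true else false.

Lemma filter_is_inl (T : Type) (s1 s2 : seq T) :
  filter (@is_inl T) (tagged_cat s1 s2) = map inl s1.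
Proof.
rewrite filter_cat (_ : filter _ (map inr s2) = [::]) ?cats0; last by elim: s2.
by elim: s1 => //= a s1 ->.
Qed.

Lemma filter_predC_is_inl (T : Type) (s1 s2 : seq T) :
  filter (predC (@is_inl T)) (tagged_cat s1 s2) = map inr s2.
Proof.
rewrite filter_cat (_ : filter _ (map inl s1) = [::]) ?cat0s; last by elim: s1.
by elim: s2 => //= a s2 ->.
Qed.

Section TaggedKey.
Variables (T : eqType) (K : nat) (cell : T -> 'I_K) (o : 'I_K -> int).
Hypothesis o_sign : forall i, o i = 1%R \/ o i = (-1)%R.
Variables (B : nat) (coord1 coord2 : T -> nat) (s1 s2 : seq T).
Hypotheses (s1_lt : {in s1, forall a, coord1 a < B}) (s2_lt : {in s2, forall a, coord2 a < B}).
Hypotheses (lex1 : {in s1 &, forall a b, (coord1 a < coord1 b) = cell_lex coord1 cell a b})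
           (lex2 : {in s2 &, forall a b, (coord2 a < coord2 b) = cell_lex coord2 cell a b}).

(* The side flag puts the left summand
   below the right one in a cell with [o = 1] and above it when [o = -1], so that in
   every cell the left summand comes first in the cell's orientation. [B] bounds the
   coordinates. *)
Definition tkey (z : T + T) : nat := match z with
  | inl a => lexkey B (cell a) (o (cell a) == -1)%R (coord1 a)
  | inr b => lexkey B (cell b) (o (cell b) == 1)%R (coord2 b)
  end.

Lemma tkey_ll a b : a \in s1 -> b \in s1 -> (tkey (inl a) < tkey (inl b)) = (coord1 a < coord1 b).
Proof.
move=> a1 b1; rewrite lex1 // /cell_lex lexkey_ltE ?s1_lt //.
by case: eqVneq => [->|]; rewrite ?ltnn ?eqxx.
Qed.

Lemma tkey_rr a b : a \in s2 -> b \in s2 -> (tkey (inr a) < tkey (inr b)) = (coord2 a < coord2 b).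
Proof.
move=> a2 b2; rewrite lex2 // /cell_lex lexkey_ltE ?s2_lt //.
by case: eqVneq => [->|]; rewrite ?ltnn ?eqxx.
Qed.

Lemma tkey_lr a b : a \in s1 -> b \in s2 ->
  (tkey (inl a) < tkey (inr b)) =
  (cell a < cell b) || ((cell a == cell b) && (o (cell b) == 1)%R).
Proof.
move=> a1 b2; rewrite lexkey_ltE ?s1_lt ?s2_lt //.
by case: eqVneq => [->|] //=; rewrite ltnn /=; case: (o_sign (cell b)) => ->.
Qed.

Lemma tkey_rl b a : b \in s2 -> a \in s1 ->
  (tkey (inr b) < tkey (inl a)) =
  (cell b < cell a) || ((cell b == cell a) && (o (cell a) == -1)%R).
Proof.
move=> b2 a1; rewrite lexkey_ltE ?s1_lt ?s2_lt //.
by case: eqVneq => [->|] //=; rewrite ltnn /=; case: (o_sign (cell a)) => ->.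
Qed.

Lemma tkey_prec a b : a \in s1 -> b \in s2 -> prec tkey (cell \o @untag_sum T) o (inl a) (inr b).
Proof.
move=> a1 b2; rewrite /prec /= => eab; rewrite tkey_lr // tkey_rl // eab ltnn eqxx /=.
by split=> ->.
Qed.

Lemma rank_tkey_inl a : a \in s1 -> rank tkey (tagged_cat s1 s2) (inl a) =
  rank coord1 s1 a +
  count (fun b => (cell b < cell a) || ((cell b == cell a) && (o (cell a) == -1)%R)) s2.
Proof.
move=> a1; rewrite /rank /tagged_cat count_cat !count_map; congr (_ + _).
  by apply: eq_in_count => b b1 /=; rewrite tkey_ll.
by apply: eq_in_count => b b2 /=; rewrite tkey_rl.
Qed.

Lemma rank_tkey_inr b : b \in s2 -> rank tkey (tagged_cat s1 s2) (inr b) =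
  count (fun a => (cell a < cell b) || ((cell a == cell b) && (o (cell b) == 1)%R)) s1 +
  rank coord2 s2 b.
Proof.
move=> b2; rewrite /rank /tagged_cat count_cat !count_map; congr (_ + _).
  by apply: eq_in_count => a a1 /=; rewrite tkey_lr.
by apply: eq_in_count => a a2 /=; rewrite tkey_rr.
Qed.

Lemma tkey_inj : {in s1 &, injective coord1} -> {in s2 &, injective coord2} ->
  {in tagged_cat s1 s2 &, injective tkey}.
Proof.
move=> inj1 inj2 [a|a] [b|b]; rewrite ?mem_tagged_cat_inl ?mem_tagged_cat_inr => az bz /eqP;
  rewrite lexkey_eqE ?s1_lt ?s2_lt // => /and3P[/eqP eab flag /eqP ecoord].
- by congr inl; apply: inj1.
- by move: flag; rewrite eab; case: (o_sign (cell b)) => ->.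
- by move: flag; rewrite eab; case: (o_sign (cell b)) => ->.
- by congr inr; apply: inj2.
Qed.

Lemma tkey_mono : {in tagged_cat s1 s2 &, forall z1 z2,
  tkey z1 < tkey z2 -> cell (untag_sum z1) <= cell (untag_sum z2)}.
Proof.
move=> [a|a] [b|b]; rewrite ?mem_tagged_cat_inl ?mem_tagged_cat_inr => az bz;
  by rewrite lexkey_ltE ?s1_lt ?s2_lt // => /orP[/ltnW //|/andP[/eqP -> _]].
Qed.

End TaggedKey.

Arguments tkey : simpl never.

Section SplitKey.
Variables (T : eqType) (K : nat) (coord : T -> nat) (cell : T -> 'I_K) (o : 'I_K -> int).
Hypothesis o_sign : forall i, o i = 1%R \/ o i = (-1)%R.
Variables (B : nat) (V : seq T) (S : pred T).
Hypotheses (V_le : size V <= B) (injV : {in V &, injective coord})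
  (monoV : {in V &, forall a b, coord a < coord b -> cell a <= cell b})
  (S_prec : {in V &, forall a b, S a -> ~~ S b -> prec coord cell o a b}).

Definition side (a : T) : T + T := if S a then inl a else inr a.

Local Notation skey := (tkey cell o B (rank coord (filter S V)) (rank coord (filter (predC S) V))).

Lemma side_tkey_ltE : {in V &, forall a b, (skey (side a) < skey (side b)) = (coord a < coord b)}.
Proof.
have lexV := lt_cell_lex injV monoV.
have subV P : {subset filter P V <= V} by apply: mem_subseq; apply: filter_subseq.
have rank_lt P : {in filter P V, forall a, rank coord (filter P V) a < B}.
  move=> a aP; apply: leq_trans (rank_lt_size _ aP) (leq_trans _ V_le).
  by rewrite size_filter count_size.
have rank_lex P : {in filter P V &, forall a b,
    (rank coord (filter P V) a < rank coord (filter P V) b) =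
    cell_lex (rank coord (filter P V)) cell a b}.
  move=> a b aP bP; rewrite rank_ltE // (lexV _ _ (subV _ _ aP) (subV _ _ bP)).
  by rewrite /cell_lex rank_ltE.
move=> a b aV bV; rewrite /side.
have inP (P : pred T) x : x \in V -> P x -> x \in filter P V.
  by move=> xV Px; rewrite mem_filter Px.
case Sa: (S a); case Sb: (S b).
- by rewrite (tkey_ll o _ (rank_lt S) (rank_lex S)) ?rank_ltE ?inP.
- have nSb : ~~ S b by rewrite Sb.
  rewrite (tkey_lr cell o_sign (rank_lt S) (rank_lt (predC S))) ?inP //.
  by rewrite (prec_lt_cross o_sign (lexV _ _ aV bV) (S_prec aV bV Sa nSb)).
- have nSa : ~~ S a by rewrite Sa.
  rewrite (tkey_rl cell o_sign (rank_lt S) (rank_lt (predC S))) ?inP //.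
  by rewrite (prec_gt_cross o_sign (lexV _ _ aV bV) (S_prec bV aV Sb nSa)).
- have nSa : ~~ S a by rewrite Sa.
  have nSb : ~~ S b by rewrite Sb.
  by rewrite (tkey_rr o _ (rank_lt (predC S)) (rank_lex (predC S))) ?rank_ltE ?inP.
Qed.

End SplitKey.

(** * M-sums and initial sets *)

Section MSum.
Variables (m n : nat) (c : 'I_m -> int) (r : 'I_n -> int).
Hypotheses (c_sign : forall i, c i = 1%R \/ c i = (-1)%R)
           (r_sign : forall j, r j = 1%R \/ r j = (-1)%R).
Variables (M : 'M[int]_(m, n)) (sg tau : gperm m n).
Hypotheses (gsg : gridded M sg) (gtau : gridded M tau).

Local Notation B := (size sg + size tau).
Local Notation kxW := (tkey (@pc m n) c B (@px m n) (@px m n)).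
Local Notation kyW := (tkey (@pr m n) r B (@py m n) (@py m n)).
Local Notation colW := (@pc m n \o @untag_sum _).
Local Notation rowW := (@pr m n \o @untag_sum _).

Let sg_px_lt : {in sg, forall a, px a < B}.
Proof. by move=> a /(gridded_px_lt gsg) /leq_trans; apply; apply: leq_addr. Qed.
Let sg_py_lt : {in sg, forall a, py a < B}.
Proof. by move=> a /(gridded_py_lt gsg) /leq_trans; apply; apply: leq_addr. Qed.
Let tau_px_lt : {in tau, forall a, px a < B}.
Proof. by move=> a /(gridded_px_lt gtau) /leq_trans; apply; apply: leq_addl. Qed.
Let tau_py_lt : {in tau, forall a, py a < B}.
Proof. by move=> a /(gridded_py_lt gtau) /leq_trans; apply; apply: leq_addl. Qed.

Let lexx_sg := gridded_cell_lex_x gsg.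
Let lexy_sg := gridded_cell_lex_y gsg.
Let lexx_tau := gridded_cell_lex_x gtau.
Let lexy_tau := gridded_cell_lex_y gtau.

Lemma msum_std : msum c r sg tau = std kxW kyW colW rowW (tagged_cat sg tau).
Proof.
rewrite /msum /std /tagged_cat map_cat -!map_comp; congr (sort _ (_ ++ _)).
  apply/eq_in_map => p ps /=.
  rewrite /std_point (rank_tkey_inl c_sign sg_px_lt tau_px_lt lexx_sg ps).
  rewrite (rank_tkey_inl r_sign sg_py_lt tau_py_lt lexy_sg ps).
  by rewrite !rank_perm_iota ?(gridded_perm_px gsg) ?(gridded_perm_py gsg).
apply/eq_in_map => q qs /=.
rewrite /std_point (rank_tkey_inr c_sign sg_px_lt tau_px_lt lexx_tau qs).
rewrite (rank_tkey_inr r_sign sg_py_lt tau_py_lt lexy_tau qs).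
rewrite !rank_perm_iota ?(gridded_perm_px gtau) ?(gridded_perm_py gtau) //.
by rewrite [px q + _]addnC [py q + _]addnC.
Qed.

Lemma msum_precedes a b : a \in sg -> b \in tau ->
  prec kxW colW c (inl a) (inr b) /\ prec kyW rowW r (inl a) (inr b).
Proof.
move=> asg btau; split.
  exact: (tkey_prec c_sign sg_px_lt tau_px_lt asg btau).
exact: (tkey_prec r_sign sg_py_lt tau_py_lt asg btau).
Qed.

Let ixW : {in tagged_cat sg tau &, injective kxW}.
Proof.
apply: (tkey_inj (cell := @pc m n) c_sign sg_px_lt tau_px_lt).
  exact: config_injx (gridded_config gsg).
exact: config_injx (gridded_config gtau).
Qed.

Lemma std_tagged_inl : std kxW kyW colW rowW (map inl sg) = sg.
Proof.
rewrite -[RHS](std_gridded_id gsg); symmetry; apply: (std_iso (f := inl)) => //.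
- by move=> z1 z2 z1s z2s; apply: ixW; rewrite mem_cat ?z1s ?z2s.
- by move=> a b a1 b1; rewrite (tkey_ll c (@px m n) sg_px_lt lexx_sg a1 b1).
- by move=> a b a1 b1; rewrite (tkey_ll r (@py m n) sg_py_lt lexy_sg a1 b1).
Qed.

Lemma std_tagged_inr : std kxW kyW colW rowW (map inr tau) = tau.
Proof.
rewrite -[RHS](std_gridded_id gtau); symmetry; apply: (std_iso (f := inr)) => //.
- by move=> z1 z2 z1s z2s; apply: ixW; rewrite mem_cat ?z1s ?z2s orbT.
- by move=> a b a1 b1; rewrite (tkey_rr c (@px m n) tau_px_lt lexx_tau a1 b1).
- by move=> a b a1 b1; rewrite (tkey_rr r (@py m n) tau_py_lt lexy_tau a1 b1).
Qed.

Hypothesis HM : forall i j, M i j != 0%R -> M i j = (c i * r j)%R.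

Lemma msum_cell : {in tagged_cat sg tau &, forall z1 z2,
  colW z1 = colW z2 -> rowW z1 = rowW z2 -> kxW z1 < kxW z2 ->
  (M (colW z1) (rowW z1) = 1%R -> kyW z1 < kyW z2) /\
  (M (colW z1) (rowW z1) = (-1)%R -> kyW z2 < kyW z1)}.
Proof.
move=> [a|a] [b|b]; rewrite ?mem_tagged_cat_inl ?mem_tagged_cat_inr => az bz /= ec er.
- rewrite (tkey_ll c (@px m n) sg_px_lt lexx_sg az bz).
  rewrite !(tkey_ll r (@py m n) sg_py_lt lexy_sg) //.
  exact: (config_cell (gridded_config gsg)).
- rewrite (tkey_lr _ c_sign sg_px_lt tau_px_lt az bz) (tkey_lr _ r_sign sg_py_lt tau_py_lt az bz).
  rewrite (tkey_rl _ r_sign sg_py_lt tau_py_lt bz az) ec er !ltnn !eqxx /= => /eqP c1.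
  rewrite HM ?(config_nz (gridded_config gtau)) // c1 mul1r.
  by split=> ->.
- rewrite (tkey_rl _ c_sign sg_px_lt tau_px_lt az bz) (tkey_rl _ r_sign sg_py_lt tau_py_lt az bz).
  rewrite (tkey_lr _ r_sign sg_py_lt tau_py_lt bz az) ec er !ltnn !eqxx /= => /eqP c1.
  rewrite HM ?(config_nz (gridded_config gsg)) // c1 mulN1r.
  by case: (r_sign (pr b)) => ->.
- rewrite (tkey_rr c (@px m n) tau_px_lt lexx_tau az bz).
  rewrite !(tkey_rr r (@py m n) tau_py_lt lexy_tau) //.
  exact: (config_cell (gridded_config gtau)).
Qed.

Lemma msum_config : grid_config kxW kyW colW rowW M (tagged_cat sg tau).
Proof.
have [usg ixsg iysg _ _ nzsg _] := gridded_config gsg.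
have [utau ixtau iytau _ _ nztau _] := gridded_config gtau.
split.
- rewrite cat_uniq (map_inj_uniq (@inl_inj _ _)) (map_inj_uniq (@inr_inj _ _)) usg utau andbT.
  by apply/hasPn => _ /mapP[a _ ->]; apply/mapP => -[].
- exact: ixW.
- exact: (tkey_inj (cell := @pr m n) r_sign sg_py_lt tau_py_lt iysg iytau).
- exact: (tkey_mono (cell := @pc m n) (o := c) sg_px_lt tau_px_lt).
- exact: (tkey_mono (cell := @pr m n) (o := r) sg_py_lt tau_py_lt).
- move=> [a|a]; rewrite ?mem_tagged_cat_inl ?mem_tagged_cat_inr => az.
  + exact: nzsg.
  + exact: nztau.
- exact: msum_cell.
Qed.

Lemma msum_gridded : gridded M (msum c r sg tau).
Proof. by rewrite msum_std; apply: std_gridded; apply: msum_config. Qed.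

End MSum.

Section Split.
Variables (m n : nat) (c : 'I_m -> int) (r : 'I_n -> int).
Hypotheses (c_sign : forall i, c i = 1%R \/ c i = (-1)%R)
           (r_sign : forall j, r j = 1%R \/ r j = (-1)%R).
Variable M : 'M[int]_(m, n).
Hypothesis HM : forall i j, M i j != 0%R -> M i j = (c i * r j)%R.

Definition precedes (a b : gpoint m n) :=
  prec (@px m n) (@pc m n) c a b /\ prec (@py m n) (@pr m n) r a b.


Variable V : gperm m n.
Hypothesis GV : configG M V.

Lemma msum_split S : initial precedes V S ->
  msum c r (stdG (filter S V)) (stdG (filter (predC S) V)) = stdG V.
Proof.
move=> iS; set V1 := filter S V; set V2 := filter (predC S) V.
have G1 : gridded M (stdG V1) by apply/std_gridded/grid_config_filter.
have G2 : gridded M (stdG V2) by apply/std_gridded/grid_config_filter.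
have [_ ix iy cx ry _ _] := GV.
have V_le : size V <= size (stdG V1) + size (stdG V2).
  by rewrite !size_std !size_filter count_predC.
rewrite (msum_std c_sign r_sign G1 G2); symmetry.
pose f a := if S a then inl (std_pointG V1 a)
            else inr (std_pointG V2 a).
apply: (std_iso (f := f)).
- have pV : perm_eq V (V1 ++ V2) by rewrite perm_sym perm_filterC.
  apply: perm_trans (perm_map f pV) _; rewrite map_cat; apply: perm_cat.
    have -> : map f V1 = map (inl \o std_pointG V1) V1.
      by apply/eq_in_map => a; rewrite mem_filter /f => /andP[-> _].
    by rewrite map_comp; apply: perm_map; rewrite perm_sym perm_sort.
  have -> : map f V2 = map (inr \o std_pointG V2) V2.
    by apply/eq_in_map => a; rewrite mem_filter /f => /andP[/negbTE -> _].
  by rewrite map_comp; apply: perm_map; rewrite perm_sym perm_sort.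
- exact: config_injx (msum_config c_sign r_sign G1 G2 HM).
- move=> a b aV bV.
  have S_prec : {in V &, forall a b, S a -> ~~ S b -> prec (@px m n) (@pc m n) c a b}.
    by move=> a' b' a'V b'V Sa' nSb'; case: (iS a' b' a'V b'V Sa' nSb').
  rewrite -(side_tkey_ltE c_sign V_le ix cx S_prec aV bV).
  by rewrite /f /side; case: (S a); case: (S b).
- move=> a b aV bV.
  have S_prec : {in V &, forall a b, S a -> ~~ S b -> prec (@py m n) (@pr m n) r a b}.
    by move=> a' b' a'V b'V Sa' nSb'; case: (iS a' b' a'V b'V Sa' nSb').
  rewrite -(side_tkey_ltE r_sign V_le iy ry S_prec aV bV).
  by rewrite /f /side; case: (S a); case: (S b).
- by move=> a _; rewrite /f; case: (S a).
- by move=> a _; rewrite /f; case: (S a).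
Qed.

Lemma msum_eq_std sg tau : gridded M sg -> gridded M tau -> msum c r sg tau = stdG V ->
  exists S, [/\ initial precedes V S, sg = stdG (filter S V) & tau = stdG (filter (predC S) V)].
Proof.
move=> gsg gtau; rewrite (msum_std c_sign r_sign gsg gtau) => /esym E.
have GW := msum_config c_sign r_sign gsg gtau HM.
have [S [SQ E1 E2]] := std_filter_pullback (config_injx GV) (config_injx GW) E (@is_inl _).
exists S; split; last 2 first.
- by rewrite E1 filter_is_inl (std_tagged_inl r c_sign gsg gtau).
- by rewrite E2 filter_predC_is_inl (std_tagged_inr r c_sign gsg gtau).
move=> a b aV bV Sa nSb.
have [[x|x] xW hx] := std_point_match E aV; have := SQ a _ aV xW hx; rewrite Sa // => _.
have [[y|y] yW hy] := std_point_match E bV; have := SQ b _ bV yW hy; rewrite (negbTE nSb) // => _.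
have [ltx lty] := std_point_lt aV xW hx hy.
have [gtx gty] := std_point_lt bV yW hy hx.
rewrite mem_tagged_cat_inl in xW; rewrite mem_tagged_cat_inr in yW.
have [x_prec y_prec] := msum_precedes c_sign r_sign gsg gtau xW yW.
split.
- apply: (prec_transfer _ _ ltx gtx x_prec).
    exact: (congr1 (@pc m n) hx).
  exact: (congr1 (@pc m n) hy).
- apply: (prec_transfer _ _ lty gty y_prec).
    exact: (congr1 (@pr m n) hx).
  exact: (congr1 (@pr m n) hy).
Qed.

End Split.

Section MSumDecomposition.
Variables (m n : nat) (c : 'I_m -> int) (r : 'I_n -> int).
Hypotheses (c_sign : forall i, c i = 1%R \/ c i = (-1)%R)
           (r_sign : forall j, r j = 1%R \/ r j = (-1)%R).
Variable M : 'M[int]_(m, n).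
Hypothesis HM : forall i j, M i j != 0%R -> M i j = (c i * r j)%R.


Lemma std_filter_nil (V : gperm m n) (P : pred (gpoint m n)) :
  (stdG (filter P V) != [::]) = has P V.
Proof. by rewrite std_eq_nil -size_eq0 size_filter -lt0n -has_count. Qed.

Lemma msumL_gridded qs : (forall s, s \in qs -> gridded M s) -> gridded M (msumL c r qs).
Proof.
elim: qs => [|q qs IH] gqs /=; first by split; [split|].
apply: (msum_gridded c_sign r_sign _ _ HM); first by apply: gqs; rewrite mem_head.
by apply: IH => s sqs; apply: gqs; rewrite inE sqs orbT.
Qed.

Lemma indivisible_std B : configG M B -> indecomposable (precedes c r) B ->
  indivisible M c r (stdG B).
Proof.
move=> GB [B0 indB]; split; [exact: std_gridded | by rewrite std_eq_nil |].
case=> [sg [tau [gsg gtau sg0 tau0 E]]].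
have [S [iS esg etau]] := msum_eq_std c_sign r_sign HM GB gsg gtau E.
move: tau0; rewrite etau std_filter_nil has_predC (indB S iS) //.
by rewrite -std_filter_nil -esg.
Qed.

Lemma indecomposable_std B : configG M B -> indivisible M c r (stdG B) ->
  indecomposable (precedes c r) B.
Proof.
move=> GB [_ B0 ndiv]; split; first by move: B0; rewrite std_eq_nil.
move=> Y iY hY; apply/negPn/negP => nall; apply: ndiv.
exists (stdG (filter Y B)), (stdG (filter (predC Y) B)); split.
- exact/std_gridded/grid_config_filter.
- exact/std_gridded/grid_config_filter.
- by rewrite std_filter_nil.
- have hC : has (predC Y) B by rewrite has_predC.
  by rewrite std_filter_nil; exact: hC.
- exact: (msum_split c_sign r_sign HM GB iY).
Qed.

Lemma decomposition_msumL V Bs : configG M V -> decomposition (precedes c r) V Bs ->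
  msumL c r (map stdG Bs) = stdG V /\ (forall s, s \in map stdG Bs -> indivisible M c r s).
Proof.
elim: Bs V => [|B Bs IH] V GV /=; first by move=> ->.
case=> eB iB indB dBs; have [-> indBs] := IH _ (grid_config_filter _ GV) dBs.
have GB : configG M B by rewrite eB; apply: grid_config_filter.
split; first by rewrite {1}eB; apply: (msum_split c_sign r_sign HM GV iB).
by move=> s; rewrite inE => /orP[/eqP->|]; [apply: indivisible_std | apply: indBs].
Qed.

Lemma msumL_decomposition V qs : configG M V -> (forall s, s \in qs -> indivisible M c r s) ->
  msumL c r qs = stdG V -> exists Bs, decomposition (precedes c r) V Bs /\ qs = map stdG Bs.
Proof.
elim: qs V => [|q qs IH] V GV ind /= E.
  by move/(congr1 size): E; rewrite size_std => /esym/size0nil ->; exists [::].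
have [gq _ _] := ind q (mem_head _ _).
have ind' s : s \in qs -> indivisible M c r s by move=> sqs; apply: ind; rewrite inE sqs orbT.
have gqs : gridded M (msumL c r qs) by apply: msumL_gridded => s /ind'[].
have [S [iS eq eqs]] := msum_eq_std c_sign r_sign HM GV gq gqs E.
have [Cs [dCs ->]] := IH _ (grid_config_filter _ GV) ind' eqs.
exists (filter S V :: Cs); split; last by rewrite eq.
have eSV : filter (predC (mem (filter S V))) V = filter (predC S) V.
  by apply: eq_in_filter => x xV; rewrite /= mem_filter xV andbT.
split; rewrite ?eSV ?filter_mem_filter //.
- by move=> a b aV bV; rewrite /= !mem_filter aV bV !andbT; apply: iS.
- apply: indecomposable_std; first exact: grid_config_filter.
  by rewrite -eq; apply: ind; rewrite mem_head.
Qed.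

End MSumDecomposition.

Local Open Scope ring_scope.

Theorem lemma3p4 (m n : nat) (M : 'M[int]_(m, n))
  (c : 'I_m -> int) (r : 'I_n -> int)
  (HMent : forall i j, M i j = 0 \/ M i j = 1 \/ M i j = -1)
  (Hc : forall i, c i = 1 \/ c i = -1)
  (Hr : forall j, r j = 1 \/ r j = -1)
  (HM : forall i j, M i j != 0 -> M i j = c i * r j)
  (pi : gperm m n) (Hpi : gridded M pi) :
  exists ps : seq (gperm m n),
    [/\ (forall s, s \in ps -> indivisible M c r s),
        msumL c r ps = pi &
        forall qs : seq (gperm m n),
          (forall s, s \in qs -> indivisible M c r s) ->
          msumL c r qs = pi ->
          size qs = size ps /\ perm_eq qs ps].
Proof.
have Gpi := gridded_config Hpi; have std_pi := std_gridded_id Hpi.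
have [Bs dBs] := exists_decomposition (precedes c r) pi.
have [sumBs indBs] := decomposition_msumL Hc Hr HM Gpi dBs.
exists (map stdG Bs); split=> //; first by rewrite sumBs.
move=> qs indqs sumqs; rewrite -std_pi in sumqs.
have [Cs [dCs ->]] := msumL_decomposition Hc Hr HM Gpi indqs sumqs.
have pCB := perm_map stdG (decomposition_perm_eq dCs dBs).
by rewrite (perm_size pCB).
Qed.
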